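(* Let $\mathcal N$ be a network with a binary collision profile and character $D^*$, let $T\ge\max(D^*,1)$ be an integer, and let $(A_0,A_1,\dots,A_k)$, $k\ge1$, be a closed path in $(\mathcal M_T,\mathcal E_T)$. Define the schedule $S$ of period $kT$ by $S[T,ak+i]=A_i$ for all $a\in\mathbb Z$ and $i=0,\dots,k-1$. Then $S$ is collision free.
   Context: A network is a triple $\mathcal N=(\mathcal L,\mathcal I,D_{\mathcal L})$ where $\mathcal L$ is a finite nonempty set of links, each $\mathcal I(l)$ is a collection of nonempty subsets of $\mathcal L$, and $D_{\mathcal L}$ assigns an integer $D_{\mathcal L}(l,l')$ to every pair with $l'\in\phi$ for some $\phi\in\mathcal I(l)$. The profile is binary if every $\phi\in\mathcal I(l)$ is a singleton. The character is $D^*=\max_{l}\max_{\phi\in\mathcal I(l)}\max_{l'\in\phi}|D_{\mathcal L}(l,l')|$ (0 if there are no collision sets). A schedule is a map $S:\mathcal L\times\mathbb Z\to\{0,1\}$; $S(l,t)$ has a collision if there is $\phi\in\mathcal I(l)$ with $S(l',t+D_{\mathcal L}(l,l'))=1$ for all $l'\in\phi$; $S$ is collision free if no $(l,t)$ with $S(l,t)=1$ has a collision. $S[T,k]$ is the $|\mathcal L|\times T$ binary matrix with $S[T,k](l,j)=S(l,kT+j)$, $j=0,\dots,T-1$. The scheduling graph $(\mathcal M_T,\mathcal E_T)$ has vertex set $\mathcal M_T$ = all $|\mathcal L|\times T$ binary matrices $A$ with $A=S'[T,0]$ for some collision-free schedule $S'$, and edge set $\mathcal E_T$ = all pairs $(A,B)$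 with $A=S'[T,0]$, $B=S'[T,1]$ for some collision-free schedule $S'$. A closed path is a sequence $(A_0,\dots,A_k)$ with $(A_i,A_{i+1})\in\mathcal E_T$ for all $i$ and $A_k=A_0$. *)

From mathcomp Require Import all_boot all_order all_algebra.
Set Implicit Arguments. Unset Strict Implicit. Unset Printing Implicit Defensive.
Import Order.TTheory GRing.Theory Num.Theory.

(* A network over the finite set of links L:
   I l : {set {set L}} is the collection of collision sets of link l,
   D : L -> L -> int gives the delays (only values D l l' with l' in some
   phi \in I l matter). *)

Definition network_ok (L : finType) (I : L -> {set {set L}}) : Prop :=
  (0 < #|L|)%N /\ forall l phi, phi \in I l -> phi != set0.

Definition binary_profile (L : finType) (I : L -> {set {set L}}) : Prop :=
  forall l phi, phi \in I l -> #|phi| = 1%N.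

(* character D^* (0 if there are no collision sets) *)
Definition character (L : finType) (I : L -> {set {set L}}) (D : L -> L -> int) : nat :=
  \max_(l : L) \max_(phi in I l) \max_(l' in phi) `|D l l'|%N.

Definition schedule (L : finType) := L -> int -> bool.

Definition has_collision (L : finType) (I : L -> {set {set L}}) (D : L -> L -> int)
  (S : schedule L) (l : L) (t : int) : Prop :=
  exists2 phi, phi \in I l & forall l', l' \in phi -> S l' (t + D l l')%R.

Definition collision_free (L : finType) (I : L -> {set {set L}}) (D : L -> L -> int)
  (S : schedule L) : Prop :=
  forall l t, S l t -> ~ has_collision I D S l t.

Definition bmatrix (L : finType) (T : nat) := {ffun L * 'I_T -> bool}.

(* S[T,k](l,j) = S(l, kT + j) *)
Definition block (L : finType) (S : schedule L) (T : nat) (k : int) : bmatrix L T :=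
  [ffun p : L * 'I_T => S p.1 (k * T%:Z + (nat_of_ord p.2)%:Z)%R].

Definition vertex (L : finType) I D (T : nat) (A : bmatrix L T) : Prop :=
  exists S' : schedule L, collision_free I D S' /\ A = block S' T 0.

Definition edge (L : finType) I D (T : nat) (A B : bmatrix L T) : Prop :=
  exists S' : schedule L, collision_free I D S' /\ A = block S' T 0 /\ B = block S' T 1.

Definition closed_path (L : finType) I D (T : nat) (k : nat) (A : nat -> bmatrix L T) : Prop :=
  (forall i, (i < k)%N -> edge I D (A i) (A i.+1)) /\ A k = A 0%N.

From mathcomp Require Import all_boot all_order all_algebra.
From mathcomp Require Import zify.
Import Order.TTheory GRing.Theory Num.Theory.
Local Open Scope ring_scope.

(* Suppose S(l,t) = 1 collides: by the binary profile there is a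
   single link l' with S(l', t + d) = 1, where d = D(l,l') and |d| <= D^* <= T.
   Since |d| <= T, the two times t and t + d both lie in a window
   [nT, nT + 2T) of two consecutive blocks n, n+1 of S.  By construction of S,
   these blocks are A_i and A_(i+1) for i = n mod k (the wrap-around i = k-1
   uses A_k = A_0), and (A_i, A_(i+1)) is an edge of the scheduling graph:
   it is realised as blocks 0, 1 of a collision-free schedule S'.  Hence S
   and S' agree (after a shift by nT) on the whole window, so the collision
   of S transports to a collision of S', a contradiction.
   The file proves, in order: agreement of schedules with equal blocks
   ([agree_on_window]), the edge property of consecutive blocks of S
   ([consecutive_blocks_edge]), the bound |D(l,l')| <= D^* ([delay_le_character]),
   the choice of the window ([window_decomposition]), and then [lemma4]. *)

Section Blocks.
Context {L : finType} {T : nat}.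

Lemma ord_of_int {u : int} : 0 <= u -> u < T%:Z ->
  exists j : 'I_T, u = (nat_of_ord j)%:Z.
Proof.
move=> u_ge0 u_ltT; have u_lt : (absz u < T)%N by lia.
by exists (Ordinal u_lt) => /=; lia.
Qed.

Lemma block_eq_entry {S S' : schedule L} {m m' : int} :
  block S T m = block S' T m' ->
  forall l (j : 'I_T), S l (m * T%:Z + j%:Z) = S' l (m' * T%:Z + j%:Z).
Proof.
by move=> eq_blocks l j; have := congr1 (fun f : bmatrix L T => f (l, j)) eq_blocks;
  rewrite !ffunE.
Qed.

Lemma agree_on_window {S S' : schedule L} {n : int} :
  block S T n = block S' T 0 -> block S T (n + 1) = block S' T 1 ->
  forall l (u : int), 0 <= u -> u < 2 * T%:Z -> S l (n * T%:Z + u) = S' l u.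
Proof.
move=> eq0 eq1 l u u_ge0 u_lt2T.
have [u_ltT | u_geT] := ltrP u T%:Z.
  have [j ->] := ord_of_int u_ge0 u_ltT.
  by rewrite (block_eq_entry eq0) mul0r add0r.
have [j def_j] : exists j : 'I_T, u - T%:Z = j%:Z by apply: ord_of_int; lia.
have := block_eq_entry eq1 l j; rewrite -def_j mul1r.
have -> : (n + 1) * T%:Z + (u - T%:Z) = n * T%:Z + u by lia.
by move=> ->; congr (S' l _); lia.
Qed.

End Blocks.

Lemma consecutive_blocks_edge {L : finType} {I : L -> {set {set L}}}
  {D : L -> L -> int} {T k : nat} {A : nat -> bmatrix L T} {S : schedule L} :
  (1 <= k)%N -> closed_path I D k A ->
  (forall (a : int) (i : nat), (i < k)%N -> block S T (a * k%:Z + i%:Z) = A i) ->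
  forall n : int, edge I D (block S T n) (block S T (n + 1)).
Proof.
move=> k_gt0 [path_edge path_closed] S_def n.
pose i := absz (n %% k%:Z)%Z.
have i_lt_k : (i < k)%N by rewrite /i; have := ltz_pmod n (k_gt0 : (0 < k%:Z)); lia.
have def_n : n = (n %/ k%:Z)%Z * k%:Z + i%:Z.
  by rewrite {1}(divz_eq n k%:Z) /i gez0_abs // modz_ge0 //; lia.
have block_n : block S T n = A i by rewrite def_n S_def.
have block_n1 : block S T (n + 1) = A i.+1.
  have [i1_lt_k | i1_ge_k] := ltnP i.+1 k.
    have -> : n + 1 = (n %/ k%:Z)%Z * k%:Z + i.+1%:Z by rewrite {1}def_n; lia.
    exact: S_def.
  have i1_eq_k : i.+1 = k by lia.
  rewrite i1_eq_k path_closed.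
  have -> : n + 1 = ((n %/ k%:Z)%Z + 1) * k%:Z + 0%:Z.
    by rewrite {1}def_n -i1_eq_k mulrDl mul1r; lia.
  exact: S_def.
by rewrite block_n block_n1; apply: path_edge.
Qed.

Lemma delay_le_character {L : finType} {I : L -> {set {set L}}}
  {D : L -> L -> int} {l : L} {phi : {set L}} {l' : L} :
  phi \in I l -> l' \in phi -> (absz (D l l') <= character I D)%N.
Proof.
move=> phi_in l'_in; rewrite /character.
have le_link := leq_bigmax (F := fun l =>
  (\max_(phi in I l) \max_(l' in phi) absz (D l l'))%N) l.
have le_set := leq_bigmax_cond (P := fun phi : {set L} => phi \in I l)
  (F := fun phi => (\max_(l' in phi) absz (D l l'))%N) phi phi_in.
have le_delay := leq_bigmax_cond (P := fun x : L => x \in phi)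
  (F := fun x => absz (D l x)) l' l'_in.
exact: leq_trans le_delay (leq_trans le_set le_link).
Qed.

Lemma window_decomposition {T : nat} (t : int) {d : int} :
  (0 < T)%N -> `|d| <= T%:Z ->
  exists n u, [/\ 0 <= u, u < 2 * T%:Z, 0 <= u + d, u + d < 2 * T%:Z
                & t = n * T%:Z + u].
Proof.
move=> T_gt0 d_le_T.
have r_ge0 : 0 <= (t %% T%:Z)%Z by apply: modz_ge0; lia.
have r_ltT : (t %% T%:Z)%Z < T%:Z by apply: ltz_pmod; lia.
have def_t := divz_eq t T%:Z.
have [d_ge0 | d_lt0] := lerP 0 d.
  exists (t %/ T%:Z)%Z, (t %% T%:Z)%Z; split => //; lia.
by exists ((t %/ T%:Z)%Z - 1), ((t %% T%:Z)%Z + T%:Z); split; lia.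
Qed.

Theorem lemma4 (L : finType) (I : L -> {set {set L}}) (D : L -> L -> int)
  (T k : nat) (A : nat -> bmatrix L T) (S : schedule L) :
  network_ok I ->
  binary_profile I ->
  (maxn (character I D) 1 <= T)%N ->
  (1 <= k)%N ->
  closed_path I D k A ->
  (forall (a : int) (i : nat), (i < k)%N ->
      block S T (a * k%:Z + i%:Z)%R = A i) ->
  collision_free I D S.
Proof.
move=> _ binary T_ge k_gt0 closed S_def l t S_lt [phi phi_in collide].
have /cards1P [l' def_phi] : #|phi| == 1%N by rewrite (binary l phi phi_in).
have l'_in : l' \in phi by rewrite def_phi set11.
have d_le_T : `|D l l'| <= T%:Z.
  have : (absz (D l l') <= T)%N.
    exact: leq_trans (delay_le_character phi_in l'_in) (leq_trans (leq_maxl _ _) T_ge).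
  lia.
have T_gt0 : (0 < T)%N by apply: leq_trans T_ge; rewrite leq_maxr.
have [n [u [u_ge0 u_lt ud_ge0 ud_lt def_t]]] := window_decomposition t T_gt0 d_le_T.
have [S' [S'_free [block0 block1]]] :=
  consecutive_blocks_edge k_gt0 closed S_def n.
have agree := agree_on_window block0 block1.
apply: (S'_free l u); first by rewrite -agree // -def_t.
exists phi => // l''; rewrite def_phi inE => /eqP ->.
by rewrite -agree // addrA -def_t collide.
Qed.
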